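(* Let $G=\langle x,y\mid x^2y^3=1\rangle$ and $C=\langle a,b\mid (ab^{-3})^2b^6=1\rangle$. Then $x\mapsto ab^{-3}$, $y\mapsto b^2$ defines an embedding $G\hookrightarrow C$; $C$ is isomorphic, via $a\mapsto a_0$, $b\mapsto b$, to $G_1=\langle a_0,a_{-1},a_{-2},b\mid a_0b=ba_{-1},\ a_{-1}b=ba_{-2},\ a_{-2}b=ba_0^{-1}\rangle$; and every element of $G_1$ has a unique representation $b^na_{i_1}^{\varepsilon_1}\cdots a_{i_m}^{\varepsilon_m}$ with $n\in\mathbb Z$, $m\ge0$, $-2\le i_j\le 0$, $\varepsilon_j=\pm1$, and no consecutive pair $a_i^{\varepsilon}a_i^{-\varepsilon}$. *)

From Stdlib Require Import List ZArith Relations.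
Import ListNotations.
Set Implicit Arguments.

(* A letter is a generator together with an exponent flag:
   (g, false) = g, (g, true) = g^-1. *)
Definition letter (A : Type) := (A * bool)%type.
Definition word (A : Type) := list (letter A).

Definition inv_letter {A} (l : letter A) : letter A := (fst l, negb (snd l)).
Definition inv_word {A} (w : word A) : word A := rev (map inv_letter w).

Inductive pstep {A} (R : list (word A)) : word A -> word A -> Prop :=
| pstep_free : forall (u v : word A) (l : letter A), pstep R (u ++ l :: inv_letter l :: v) (u ++ v)
| pstep_rel : forall (u v r : word A), In r R -> pstep R (u ++ r ++ v) (u ++ v).

(* Equality in the group < A | R > : the equivalence generated by pstep
   (a congruence, since moves are allowed in any context). *)
Definition pres_eq {A} (R : list (word A)) : word A -> word A -> Prop :=
  clos_refl_sym_trans (word A) (pstep R).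

Definition subst {A B} (f : A -> word B) (w : word A) : word B :=
  concat (map (fun l : letter A => if snd l then inv_word (f (fst l)) else f (fst l)) w).

Definition hom_wd {A B} (RA : list (word A)) (RB : list (word B)) (f : A -> word B) :=
  forall u v, pres_eq RA u v -> pres_eq RB (subst f u) (subst f v).

Definition hom_inj {A B} (RA : list (word A)) (RB : list (word B)) (f : A -> word B) :=
  forall u v, pres_eq RB (subst f u) (subst f v) -> pres_eq RA u v.

Definition hom_surj {A B} (RA : list (word A)) (RB : list (word B)) (f : A -> word B) :=
  forall w, exists u, pres_eq RB w (subst f u).

Inductive Ggen := gx | gy.
Definition RG : list (word Ggen) :=
  [[(gx,false); (gx,false); (gy,false); (gy,false); (gy,false)]].

Inductive Cgen := ca | cb.
Definition RC : list (word Cgen) :=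
  [[(ca,false); (cb,true); (cb,true); (cb,true);
    (ca,false); (cb,true); (cb,true); (cb,true);
    (cb,false); (cb,false); (cb,false); (cb,false); (cb,false); (cb,false)]].

(* G1 = < a_0, a_{-1}, a_{-2}, b | a_0 b = b a_{-1}, a_{-1} b = b a_{-2},
          a_{-2} b = b a_0^-1 >, relators written as  lhs * rhs^-1. *)
Inductive Aidx := i0 | im1 | im2.   (* indices 0, -1, -2 *)
Inductive G1gen := ga (i : Aidx) | gb.
Definition RG1 : list (word G1gen) :=
  [ [(ga i0,false); (gb,false); (ga im1,true); (gb,true)];
    [(ga im1,false); (gb,false); (ga im2,true); (gb,true)];
    [(ga im2,false); (gb,false); (ga i0,false); (gb,true)] ].

Definition phiGC (g : Ggen) : word Cgen :=
  match g with
  | gx => [(ca,false); (cb,true); (cb,true); (cb,true)]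
  | gy => [(cb,false); (cb,false)]
  end.

Definition psiCG1 (g : Cgen) : word G1gen :=
  match g with
  | ca => [(ga i0,false)]
  | cb => [(gb,false)]
  end.

Definition bpow (n : Z) : word G1gen :=
  if (0 <=? n)%Z then repeat (gb,false) (Z.to_nat n)
  else repeat (gb,true) (Z.to_nat (- n)).

Definition aword (s : word Aidx) : word G1gen :=
  map (fun l => (ga (fst l), snd l)) s.

Definition reduced {A} (s : word A) : Prop :=
  forall u v l l', s = u ++ l :: l' :: v -> l' <> inv_letter l.

Definition normal_form (n : Z) (s : word Aidx) : word G1gen := bpow n ++ aword s.

(* Equality in G1 is decided by letting G1 act on states (n, w), where n is
   an integer and w a freely reduced word in a_0, a_-1, a_-2, standing for
   b^n w: b shifts n, and a letter a_i^e is moved past b^n, becoming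
   sigma^n(a_i^e) for the order-6 automorphism sigma read off the relations,
   and is then cancelled into w.  Relators act trivially, so every word
   equals the normal form of the state it reaches (existence), and a normal
   form reaches its own state (uniqueness).

   C = G1 follows from an explicit inverse substitution checked on relators.
   For the embedding, G has normal forms z^k s with z = x^2 = y^-3 central
   and s an alternating product of syllables x, y, y^2; the image of such a
   normal form in G1 reaches a state from which k and s are decoded by
   reading its word from the left, so G -> C -> G1 is injective. *)

From Stdlib Require Import List ZArith Relations Lia.
Import ListNotations.

Section Presentation.
Variable A : Type.
Variable R : list (word A).
Local Notation pe := (pres_eq R).

Lemma pe_refl u : pe u u. Proof. apply rst_refl. Qed.
Lemma pe_sym u v : pe u v -> pe v u. Proof. apply rst_sym. Qed.
Lemma pe_trans u v w : pe u v -> pe v w -> pe u w. Proof. apply rst_trans. Qed.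

Lemma pe_free u v l : pe (u ++ l :: inv_letter l :: v) (u ++ v).
Proof. apply rst_step; constructor. Qed.

Lemma pe_rel u v r : In r R -> pe (u ++ r ++ v) (u ++ v).
Proof. intros; apply rst_step; constructor; auto. Qed.

Lemma pstep_ctx p s x y : pstep R x y -> pstep R (p ++ x ++ s) (p ++ y ++ s).
Proof.
  intros [u v l | u v r Hr]; rewrite <- !app_assoc; simpl; rewrite !(app_assoc p u).
  - apply pstep_free.
  - now apply pstep_rel.
Qed.

Lemma pe_ctx p s x y : pe x y -> pe (p ++ x ++ s) (p ++ y ++ s).
Proof.
  induction 1.
  - now apply rst_step, pstep_ctx.
  - apply pe_refl.
  - now apply pe_sym.
  - eapply pe_trans; eauto.
Qed.

Lemma pe_app u u' v v' : pe u u' -> pe v v' -> pe (u ++ v) (u' ++ v').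
Proof.
  intros Hu Hv. apply pe_trans with (u' ++ v).
  - exact (pe_ctx [] v u u' Hu).
  - pose proof (pe_ctx u' [] v v' Hv) as H. now rewrite !app_nil_r in H.
Qed.

Lemma pe_app_l p u v : pe u v -> pe (p ++ u) (p ++ v).
Proof. intros; apply pe_app; auto using pe_refl. Qed.

Lemma pe_app_r s u v : pe u v -> pe (u ++ s) (v ++ s).
Proof. intros; apply pe_app; auto using pe_refl. Qed.

Lemma inv_letter_inv (l : letter A) : inv_letter (inv_letter l) = l.
Proof. destruct l; unfold inv_letter; simpl; now rewrite Bool.negb_involutive. Qed.

Lemma inv_word_inv (w : word A) : inv_word (inv_word w) = w.
Proof.
  unfold inv_word; rewrite map_rev, rev_involutive, map_map.
  erewrite map_ext; [apply map_id|]. intros; apply inv_letter_inv.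
Qed.

Lemma pe_cancel w : pe (w ++ inv_word w) [].
Proof.
  induction w as [|l w IH]; [apply pe_refl|].
  replace ((l :: w) ++ inv_word (l :: w)) with ([l] ++ (w ++ inv_word w) ++ [inv_letter l])
    by (unfold inv_word; simpl; now rewrite !app_assoc).
  apply pe_trans with ([l] ++ [] ++ [inv_letter l]).
  - now apply pe_ctx.
  - exact (pe_free [] [] l).
Qed.

Lemma pe_cancel_inv w : pe (inv_word w ++ w) [].
Proof. pose proof (pe_cancel (inv_word w)) as H; now rewrite inv_word_inv in H. Qed.

Lemma pe_cancel_l p w : pe (p ++ inv_word p ++ w) w.
Proof. rewrite app_assoc. exact (pe_app_r w _ _ (pe_cancel p)). Qed.

Lemma pe_cancel_inv_l p w : pe (inv_word p ++ p ++ w) w.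
Proof. rewrite app_assoc. exact (pe_app_r w _ _ (pe_cancel_inv p)). Qed.

Lemma conj_swap x y c : pe [x; c] [c; y] -> pe [y; inv_letter c] [inv_letter c; x].
Proof.
  intros H. apply pe_trans with ([inv_letter c] ++ [c; y] ++ [inv_letter c]).
  { apply pe_sym. pose proof (pe_free [] [y; inv_letter c] (inv_letter c)) as Hf.
    now rewrite inv_letter_inv in Hf. }
  apply pe_trans with ([inv_letter c] ++ [x; c] ++ [inv_letter c]).
  { apply pe_ctx, pe_sym, H. }
  exact (pe_free [inv_letter c; x] [] c).
Qed.

Lemma commute_inv l p : pe (l ++ p) (p ++ l) -> pe (l ++ inv_word p) (inv_word p ++ l).
Proof.
  intros H. set (q := inv_word p).
  apply pe_trans with ((q ++ p) ++ l ++ q).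
  { apply pe_sym. exact (pe_app_r (l ++ q) _ _ (pe_cancel_inv p)). }
  replace ((q ++ p) ++ l ++ q) with (q ++ (p ++ l) ++ q) by now rewrite !app_assoc.
  apply pe_trans with (q ++ (l ++ p) ++ q).
  { apply pe_app_l, pe_app_r, pe_sym, H. }
  replace (q ++ (l ++ p) ++ q) with ((q ++ l) ++ (p ++ q)) by now rewrite !app_assoc.
  pose proof (pe_app_l (q ++ l) _ _ (pe_cancel p)) as Hc. now rewrite app_nil_r in Hc.
Qed.

End Presentation.

Section FreeReduction.
Variable A : Type.
Variable eqb : letter A -> letter A -> bool.
Hypothesis eqb_spec : forall x y, eqb x y = true <-> x = y.

Definition cancel_cons (l : letter A) (w : word A) : word A :=
  match w with
  | l' :: t => if eqb l' (inv_letter l) then t else l :: w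
  | [] => [l]
  end.

Definition free_reduce (w : word A) : word A := fold_right cancel_cons [] w.

Fixpoint is_reduced (w : word A) : bool :=
  match w with
  | l :: ((l' :: _) as t) => negb (eqb l' (inv_letter l)) && is_reduced t
  | _ => true
  end.

Lemma eqb_refl x : eqb x x = true.
Proof. now apply eqb_spec. Qed.

Lemma is_reduced_tail l w : is_reduced (l :: w) = true -> is_reduced w = true.
Proof. destruct w; simpl; auto. now intros [_ H]%andb_prop. Qed.

Lemma reduced_iff s : reduced s <-> is_reduced s = true.
Proof.
  split.
  - induction s as [|l [|l' t] IH]; intros H; simpl; auto.
    apply andb_true_intro; split.
    + destruct (eqb l' (inv_letter l)) eqn:E; auto.
      exfalso. exact (H [] t l l' eq_refl (proj1 (eqb_spec _ _) E)).
    + apply IH. intros u v x y Hs. apply (H (l :: u) v x y). now rewrite Hs.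
  - intros H u. revert s H.
    induction u as [|a u IH]; intros s H v l l' -> E; simpl in H.
    + subst l'. apply andb_prop in H as [H _]. now rewrite eqb_refl in H.
    + exact (IH _ (is_reduced_tail _ _ H) v l l' eq_refl E).
Qed.

Lemma is_reduced_cons l h t :
  is_reduced (h :: t) = true -> h <> inv_letter l -> is_reduced (l :: h :: t) = true.
Proof.
  intros H Hh. simpl. apply andb_true_intro; split; [|exact H].
  destruct (eqb h (inv_letter l)) eqn:E; auto. now apply eqb_spec in E.
Qed.

Lemma cancel_cons_reduced l w : is_reduced w = true -> is_reduced (cancel_cons l w) = true.
Proof.
  intros H; destruct w as [|l' t]; simpl; auto.
  destruct (eqb l' (inv_letter l)) eqn:E; [eapply is_reduced_tail; eauto|].
  simpl. now rewrite E.
Qed.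

Lemma cancel_cons_eq l w : is_reduced (l :: w) = true -> cancel_cons l w = l :: w.
Proof.
  destruct w as [|l' t]; simpl; auto. intros [H _]%andb_prop.
  now destruct (eqb l' (inv_letter l)).
Qed.

Lemma cancel_cons_inv l w :
  is_reduced w = true -> cancel_cons l (cancel_cons (inv_letter l) w) = w.
Proof.
  intros H; destruct w as [|l' t]; simpl.
  - now rewrite eqb_refl.
  - destruct (eqb l' (inv_letter (inv_letter l))) eqn:E.
    + apply eqb_spec in E. rewrite inv_letter_inv in E. subst l'.
      destruct t as [|l'' t]; simpl; auto. apply andb_prop in H as [H _].
      now destruct (eqb l'' (inv_letter l)).
    + simpl. now rewrite eqb_refl.
Qed.

Variable R : list (word A).

Lemma pe_cancel_cons l w : pres_eq R (l :: w) (cancel_cons l w).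
Proof.
  destruct w as [|l' t]; simpl; [apply pe_refl|].
  destruct (eqb l' (inv_letter l)) eqn:E; [|apply pe_refl].
  apply eqb_spec in E; subst. exact (pe_free _ _ [] t l).
Qed.

Lemma pe_free_reduce w : pres_eq R w (free_reduce w).
Proof.
  induction w as [|l w IH]; simpl; [apply pe_refl|].
  eapply pe_trans; [apply (pe_app_l _ _ [l]), IH | apply pe_cancel_cons].
Qed.

Lemma pe_by_free_reduce u v : free_reduce u = free_reduce v -> pres_eq R u v.
Proof.
  intros H. eapply pe_trans; [apply pe_free_reduce|].
  rewrite H. apply pe_sym, pe_free_reduce.
Qed.

Lemma pe_by_rel r p s u v : In r R ->
  free_reduce (p ++ r ++ s) = free_reduce u -> free_reduce (p ++ s) = free_reduce v ->
  pres_eq R u v.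
Proof.
  intros Hr Hu Hv. apply pe_trans with (p ++ r ++ s); [now apply pe_by_free_reduce|].
  eapply pe_trans; [now apply pe_rel | now apply pe_by_free_reduce].
Qed.

End FreeReduction.

Definition crep {A} (p : word A) (m : nat) : word A := concat (repeat p m).

Definition zpow {A} (p : word A) (n : Z) : word A :=
  if (0 <=? n)%Z then crep p (Z.to_nat n) else crep (inv_word p) (Z.to_nat (- n)).

Section Powers.
Variable A : Type.
Variable R : list (word A).
Variable p : word A.
Local Notation pe := (pres_eq R).
Local Open Scope Z_scope.

Lemma zpow_nonneg n : 0 <= n -> zpow p n = crep p (Z.to_nat n).
Proof. intros H. unfold zpow. now destruct (Z.leb_spec 0 n); [|lia]. Qed.

Lemma zpow_nonpos n : n <= 0 -> zpow p n = crep (inv_word p) (Z.to_nat (- n)).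
Proof.
  intros H. unfold zpow. destruct (Z.leb_spec 0 n); auto.
  now replace n with 0 by lia.
Qed.

Lemma zpow_succ n : pe (p ++ zpow p n) (zpow p (n + 1)).
Proof.
  destruct (Z_le_gt_dec 0 n).
  - rewrite !zpow_nonneg by lia. replace (Z.to_nat (n + 1)) with (S (Z.to_nat n)) by lia.
    apply pe_refl.
  - rewrite !zpow_nonpos by lia. replace (Z.to_nat (- n)) with (S (Z.to_nat (- (n + 1)))) by lia.
    apply pe_cancel_l.
Qed.

Lemma zpow_pred n : pe (inv_word p ++ zpow p n) (zpow p (n - 1)).
Proof.
  destruct (Z_le_gt_dec n 0).
  - rewrite !zpow_nonpos by lia. replace (Z.to_nat (- (n - 1))) with (S (Z.to_nat (- n))) by lia.
    apply pe_refl.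
  - rewrite !zpow_nonneg by lia. replace (Z.to_nat n) with (S (Z.to_nat (n - 1))) by lia.
    apply pe_cancel_inv_l.
Qed.

Lemma commute_crep l q m : pe (l ++ q) (q ++ l) -> pe (l ++ crep q m) (crep q m ++ l).
Proof.
  intros H. induction m as [|m IH]; [rewrite app_nil_r; apply pe_refl|].
  change (crep q (S m)) with (q ++ crep q m). rewrite app_assoc.
  apply pe_trans with ((q ++ l) ++ crep q m); [now apply pe_app_r|].
  rewrite <- !app_assoc. now apply pe_app_l.
Qed.

Lemma commute_zpow l n : pe (l ++ p) (p ++ l) -> pe (l ++ zpow p n) (zpow p n ++ l).
Proof.
  intros H. unfold zpow. destruct (0 <=? n); apply commute_crep; auto.
  now apply commute_inv.
Qed.

End Powers.

Lemma subst_app {A B} (f : A -> word B) u v : subst f (u ++ v) = subst f u ++ subst f v.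
Proof. unfold subst; now rewrite map_app, concat_app. Qed.

Lemma hom_wd_of_relators {A B} (RA : list (word A)) (RB : list (word B)) f :
  (forall r, In r RA -> pres_eq RB (subst f r) []) -> hom_wd RA RB f.
Proof.
  intros Hr u v H; induction H as [x y [u v l | u v r Hin]| | |].
  - change (l :: inv_letter l :: v) with ([l; inv_letter l] ++ v).
    rewrite !subst_app. apply (pe_ctx _ _ _ _ _ []).
    destruct l as [g []]; unfold subst; simpl; rewrite app_nil_r;
      [apply pe_cancel_inv | apply pe_cancel].
  - rewrite !subst_app. apply (pe_ctx _ _ _ _ _ []). now apply Hr.
  - apply pe_refl.
  - now apply pe_sym.
  - eapply pe_trans; eauto.
Qed.

Local Open Scope Z_scope.

Definition aidx_eqb (i j : Aidx) : bool :=
  match i, j with i0, i0 | im1, im1 | im2, im2 => true | _, _ => false end.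

Definition aletter_eqb (x y : letter Aidx) : bool :=
  aidx_eqb (fst x) (fst y) && Bool.eqb (snd x) (snd y).

Lemma aletter_eqb_spec x y : aletter_eqb x y = true <-> x = y.
Proof.
  destruct x as [[] []], y as [[] []]; simpl; split; intro H; try discriminate; reflexivity.
Qed.

Definition acons := cancel_cons Aidx aletter_eqb.
Definition areduced := is_reduced Aidx aletter_eqb.

(* The relations of G1 say a b = b sigma(a) for a in {a_0, a_-1, a_-2}, where
   sigma is the automorphism a_0 -> a_-1 -> a_-2 -> a_0^-1 of the free group
   on the a_i; sigma has order 6 and sigma^3 is inversion. *)
Definition sigma (c : letter Aidx) : letter Aidx :=
  match c with (i0, e) => (im1, e) | (im1, e) => (im2, e) | (im2, e) => (i0, negb e) end.

Definition sigma_inv (c : letter Aidx) : letter Aidx :=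
  match c with (im1, e) => (i0, e) | (im2, e) => (im1, e) | (i0, e) => (im2, negb e) end.

Lemma sigma_sigma_inv c : sigma (sigma_inv c) = c. Proof. now destruct c as [[] []]. Qed.
Lemma sigma_inv_letter c : sigma (inv_letter c) = inv_letter (sigma c).
Proof. now destruct c as [[] []]. Qed.

Definition spow (n : Z) (c : letter Aidx) : letter Aidx := Nat.iter (Z.to_nat (n mod 6)) sigma c.

Lemma iter_commute {X} (f g : X -> X) (H : forall x, f (g x) = g (f x)) m x :
  Nat.iter m f (g x) = g (Nat.iter m f x).
Proof. induction m; simpl; [|rewrite IHm]; auto. Qed.

Lemma mod6_cases n :
  n mod 6 = 0 \/ n mod 6 = 1 \/ n mod 6 = 2 \/ n mod 6 = 3 \/ n mod 6 = 4 \/ n mod 6 = 5.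
Proof. pose proof (Z.mod_pos_bound n 6). lia. Qed.

Lemma spow_mod a b c : a mod 6 = b mod 6 -> spow a c = spow b c.
Proof. unfold spow; intros H; now rewrite H. Qed.

Lemma spow_eq_mod a b c : spow a c = spow b c -> a mod 6 = b mod 6.
Proof.
  unfold spow; intros H.
  destruct (mod6_cases a) as [E|[E|[E|[E|[E|E]]]]]; rewrite E in *;
  destruct (mod6_cases b) as [E'|[E'|[E'|[E'|[E'|E']]]]]; rewrite E' in *; auto;
  destruct c as [[] []]; discriminate.
Qed.

Lemma spow_succ n c : spow (n + 1) c = sigma (spow n c).
Proof.
  unfold spow. rewrite Z.add_mod by lia.
  destruct (mod6_cases n) as [H|[H|[H|[H|[H|H]]]]]; rewrite H; simpl; auto.
  now destruct c as [[] []].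
Qed.

Lemma spow_sigma n c : spow n (sigma c) = spow (n + 1) c.
Proof. rewrite spow_succ. unfold spow; now apply iter_commute. Qed.

Lemma spow_sigma_inv n c : spow n (sigma_inv c) = spow (n - 1) c.
Proof. rewrite <- (sigma_sigma_inv c) at 2. rewrite spow_sigma. f_equal; lia. Qed.

Lemma spow_inv n c : spow n (inv_letter c) = inv_letter (spow n c).
Proof. unfold spow; apply iter_commute, sigma_inv_letter. Qed.

Lemma sigma3 c : sigma (sigma (sigma c)) = inv_letter c. Proof. now destruct c as [[] []]. Qed.

Lemma spow_sub3 n c : inv_letter (spow (n - 3) c) = spow n c.
Proof.
  replace n with (n - 3 + 1 + 1 + 1) at 2 by lia.
  now rewrite !spow_succ, sigma3.
Qed.

(* A state (n, w) stands for the element b^n a_w of G1, with w a freely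
   reduced word in the a_i.  G1 acts on states: b shifts n, and a letter a
   is moved past b^n as sigma^n(a) and cancelled into w. *)
Definition state := (Z * word Aidx)%type.

Definition act (l : letter G1gen) (m : state) : state :=
  let (n, w) := m in
  match l with
  | (gb, false) => (n + 1, w)
  | (gb, true) => (n - 1, w)
  | (ga i, e) => (n, acons (spow n (i, e)) w)
  end.

Definition act_word (u : word G1gen) (m : state) : state := fold_right act m u.

Definition eval (u : word G1gen) : state := act_word u (0, []).

Definition state_ok (m : state) : Prop := areduced (snd m) = true.

Lemma act_word_app u v m : act_word (u ++ v) m = act_word u (act_word v m).
Proof. unfold act_word; now rewrite fold_right_app. Qed.

Lemma act_ok l m : state_ok m -> state_ok (act l m).
Proof.
  destruct m as [n w], l as [[i|] []]; unfold state_ok; simpl; auto;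
    apply cancel_cons_reduced.
Qed.

Lemma act_word_ok u m : state_ok m -> state_ok (act_word u m).
Proof. induction u; simpl; auto using act_ok. Qed.

Lemma eval_ok u : state_ok (eval u).
Proof. apply act_word_ok. reflexivity. Qed.

Lemma act_cancel l m : state_ok m -> act l (act (inv_letter l) m) = m.
Proof.
  destruct m as [n w], l as [[i|] []]; unfold state_ok; simpl; intros H.
  - change (i, false) with (inv_letter (i, true)).
    now rewrite spow_inv, (cancel_cons_inv _ _ aletter_eqb_spec).
  - change (i, true) with (inv_letter (i, false)).
    now rewrite spow_inv, (cancel_cons_inv _ _ aletter_eqb_spec).
  - f_equal; lia.
  - f_equal; lia.
Qed.

Lemma act_relator r m : In r RG1 -> state_ok m -> act_word r m = m.
Proof.
  destruct m as [n w]; unfold state_ok; simpl; intros Hr H.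
  destruct Hr as [<-|[<-|[<-|[]]]]; simpl; replace (n - 1 + 1) with n by lia; f_equal.
  - change (im1, true) with (sigma (inv_letter (i0, false))).
    now rewrite spow_sigma, Z.sub_add, spow_inv, (cancel_cons_inv _ _ aletter_eqb_spec).
  - change (im2, true) with (sigma (inv_letter (im1, false))).
    now rewrite spow_sigma, Z.sub_add, spow_inv, (cancel_cons_inv _ _ aletter_eqb_spec).
  - change (i0, false) with (sigma (inv_letter (im2, false))).
    now rewrite spow_sigma, Z.sub_add, spow_inv, (cancel_cons_inv _ _ aletter_eqb_spec).
Qed.

Lemma act_word_pe u v m : pres_eq RG1 u v -> state_ok m -> act_word u m = act_word v m.
Proof.
  intros H Hm. induction H as [x y [u v l | u v r Hr]| | |]; auto.
  - rewrite !act_word_app. f_equal. apply act_cancel, act_word_ok, Hm.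
  - rewrite !act_word_app. f_equal. apply act_relator, act_word_ok; auto.
  - congruence.
Qed.

Lemma eval_pe u v : pres_eq RG1 u v -> eval u = eval v.
Proof. intros H. apply act_word_pe; [exact H | reflexivity]. Qed.

Definition b_letter : letter G1gen := (gb, false).
Definition a_letter (c : letter Aidx) : letter G1gen := (ga (fst c), snd c).

Definition g1_eqb (x y : letter G1gen) : bool :=
  match fst x, fst y with
  | ga i, ga j => aidx_eqb i j
  | gb, gb => true
  | _, _ => false
  end && Bool.eqb (snd x) (snd y).

Lemma g1_eqb_spec x y : g1_eqb x y = true <-> x = y.
Proof.
  destruct x as [[[]|] []], y as [[[]|] []]; simpl; split; intro H;
    try discriminate; reflexivity.
Qed.

Lemma bpow_zpow n : bpow n = zpow [b_letter] n.
Proof.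
  assert (Hrep : forall (l : letter G1gen) m, repeat l m = crep [l] m)
    by (induction m as [|m IH]; simpl; [|rewrite IH]; reflexivity).
  unfold bpow, zpow. destruct (0 <=? n); apply Hrep.
Qed.

Lemma bpow_succ n : pres_eq RG1 (b_letter :: bpow n) (bpow (n + 1)).
Proof. rewrite !bpow_zpow. apply (zpow_succ _ _ [b_letter]). Qed.

Lemma bpow_pred n : pres_eq RG1 ((gb, true) :: bpow n) (bpow (n - 1)).
Proof. rewrite !bpow_zpow. apply (zpow_pred _ _ [b_letter]). Qed.

Ltac by_relator k p s :=
  apply (pe_by_rel _ _ g1_eqb_spec _ (nth k RG1 []) p s);
    [simpl; tauto | reflexivity | reflexivity].

Lemma a_b_swap c : pres_eq RG1 [a_letter c; b_letter] [b_letter; a_letter (sigma c)].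
Proof.
  destruct c as [[] []]; simpl.
  - apply pe_sym; by_relator 0%nat [(ga i0, true)] [b_letter].
  - by_relator 0%nat (@nil (letter G1gen)) [b_letter; (ga im1, false)].
  - apply pe_sym; by_relator 1%nat [(ga im1, true)] [b_letter].
  - by_relator 1%nat (@nil (letter G1gen)) [b_letter; (ga im2, false)].
  - apply pe_sym; by_relator 2%nat [(ga im2, true)] [b_letter].
  - by_relator 2%nat (@nil (letter G1gen)) [b_letter; (ga i0, true)].
Qed.

Lemma a_binv_swap c :
  pres_eq RG1 [a_letter c; (gb, true)] [(gb, true); a_letter (sigma_inv c)].
Proof.
  pose proof (a_b_swap (sigma_inv c)) as H. rewrite sigma_sigma_inv in H.
  exact (conj_swap _ _ _ _ b_letter H).
Qed.

Lemma a_bpow_swap n c :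
  pres_eq RG1 (a_letter c :: bpow n) (bpow n ++ [a_letter (spow n c)]).
Proof.
  revert c. induction n as [|n IH|n IH] using Z.peano_ind; intros c.
  - apply pe_refl.
  - rewrite <- Z.add_1_r.
    apply pe_trans with ([a_letter c; b_letter] ++ bpow n).
    { apply (pe_app_l _ _ [a_letter c]), pe_sym, bpow_succ. }
    apply pe_trans with ([b_letter] ++ a_letter (sigma c) :: bpow n).
    { apply (pe_app_r _ _ _ [_; _] [_; _]), a_b_swap. }
    apply pe_trans with ((b_letter :: bpow n) ++ [a_letter (spow (n + 1) c)]).
    { rewrite <- spow_sigma. apply (pe_app_l _ _ [b_letter]), IH. }
    apply pe_app_r, bpow_succ.
  - rewrite <- Z.sub_1_r.
    apply pe_trans with ([a_letter c; (gb, true)] ++ bpow n).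
    { apply (pe_app_l _ _ [a_letter c]), pe_sym, bpow_pred. }
    apply pe_trans with ([(gb, true)] ++ a_letter (sigma_inv c) :: bpow n).
    { apply (pe_app_r _ _ _ [_; _] [_; _]), a_binv_swap. }
    apply pe_trans with (((gb, true) :: bpow n) ++ [a_letter (spow (n - 1) c)]).
    { rewrite <- spow_sigma_inv. apply (pe_app_l _ _ [(gb, true)]), IH. }
    apply pe_app_r, bpow_pred.
Qed.

Definition state_word (m : state) : word G1gen := normal_form (fst m) (snd m).

Lemma aword_acons c w : pres_eq RG1 (a_letter c :: aword w) (aword (acons c w)).
Proof.
  destruct w as [|l t]; simpl; [apply pe_refl|].
  destruct (aletter_eqb l (inv_letter c)) eqn:E; [|apply pe_refl].
  apply aletter_eqb_spec in E; subst. exact (pe_free _ _ [] (aword t) (a_letter c)).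
Qed.

Lemma state_word_act l m : pres_eq RG1 (l :: state_word m) (state_word (act l m)).
Proof.
  destruct m as [n w]. unfold state_word, normal_form; simpl.
  destruct l as [[i|] e]; [|destruct e].
  - change (ga i, e) with (a_letter (i, e)).
    apply pe_trans with ((bpow n ++ [a_letter (spow n (i, e))]) ++ aword w).
    { exact (pe_app_r _ _ (aword w) (_ :: _) _ (a_bpow_swap n (i, e))). }
    rewrite <- app_assoc. apply pe_app_l, aword_acons.
  - exact (pe_app_r _ _ (aword w) ((gb, true) :: _) _ (bpow_pred n)).
  - exact (pe_app_r _ _ (aword w) (b_letter :: _) _ (bpow_succ n)).
Qed.

Lemma pe_state_word u : pres_eq RG1 u (state_word (eval u)).
Proof.
  induction u as [|l u IH]; [apply pe_refl|].
  eapply pe_trans; [apply (pe_app_l _ _ [l]), IH | apply state_word_act].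
Qed.

Lemma pe_of_eval u v : eval u = eval v -> pres_eq RG1 u v.
Proof.
  intros H. eapply pe_trans; [apply pe_state_word|].
  rewrite H. apply pe_sym, pe_state_word.
Qed.

Lemma act_word_bpow n m : state_ok m -> act_word (bpow n) m = (fst m + n, snd m).
Proof.
  destruct m as [k s]; intros Hm.
  induction n as [|n IH|n IH] using Z.peano_ind.
  - simpl. f_equal; lia.
  - rewrite <- Z.add_1_r, <- (act_word_pe _ _ _ (bpow_succ n) Hm). simpl. rewrite IH.
    simpl. f_equal; lia.
  - rewrite <- Z.sub_1_r, <- (act_word_pe _ _ _ (bpow_pred n) Hm). simpl. rewrite IH.
    simpl. f_equal; lia.
Qed.

Lemma eval_aword s : areduced s = true -> eval (aword s) = (0, s).
Proof.
  induction s as [|c s IH]; intros H; auto.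
  change (eval (aword (c :: s))) with (act (a_letter c) (eval (aword s))).
  rewrite IH by (eapply is_reduced_tail; eauto).
  destruct c as [i e]. simpl. unfold acons. now rewrite cancel_cons_eq.
Qed.

Lemma eval_normal_form n s : areduced s = true -> eval (normal_form n s) = (n, s).
Proof.
  intros H. unfold eval, normal_form. rewrite act_word_app.
  change (act_word (aword s) (0, [])) with (eval (aword s)).
  rewrite eval_aword, act_word_bpow by auto. reflexivity.
Qed.

Theorem normal_form_exists (w : word G1gen) :
  exists (n : Z) (s : word Aidx), reduced s /\ pres_eq RG1 w (normal_form n s).
Proof.
  exists (fst (eval w)), (snd (eval w)). split.
  - apply (reduced_iff _ _ aletter_eqb_spec), eval_ok.
  - apply pe_state_word.
Qed.

Theorem normal_form_unique (n n' : Z) (s s' : word Aidx) :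
  reduced s -> reduced s' -> pres_eq RG1 (normal_form n s) (normal_form n' s') ->
  n = n' /\ s = s'.
Proof.
  intros Hs Hs' H. apply eval_pe in H.
  rewrite !eval_normal_form in H by now apply (reduced_iff _ _ aletter_eqb_spec).
  now inversion H.
Qed.

Definition c_eqb (x y : letter Cgen) : bool :=
  match fst x, fst y with ca, ca | cb, cb => true | _, _ => false end
  && Bool.eqb (snd x) (snd y).

Lemma c_eqb_spec x y : c_eqb x y = true <-> x = y.
Proof.
  destruct x as [[] []], y as [[] []]; simpl; split; intro H; try discriminate; reflexivity.
Qed.

Definition thetaG1C (g : G1gen) : word Cgen :=
  match g with
  | ga i0 => [(ca, false)]
  | ga im1 => [(cb, true); (ca, false); (cb, false)]
  | ga im2 => [(cb, true); (cb, true); (ca, false); (cb, false); (cb, false)]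
  | gb => [(cb, false)]
  end.

(* The relator of C maps to a word acting trivially on states. *)
Lemma psi_wd : hom_wd RC RG1 psiCG1.
Proof.
  apply hom_wd_of_relators. intros r [<-|[]].
  apply pe_of_eval. vm_compute. reflexivity.
Qed.

(* The first two relations of G1 hold freely in C; the third one is the
   relator of C conjugated by b^2. *)
Lemma theta_wd : hom_wd RG1 RC thetaG1C.
Proof.
  apply hom_wd_of_relators. intros r [<-|[<-|[<-|[]]]].
  - now apply (pe_by_free_reduce _ _ c_eqb_spec).
  - now apply (pe_by_free_reduce _ _ c_eqb_spec).
  - apply (pe_by_rel _ _ c_eqb_spec _ (nth 0 RC [])
      [(cb, true); (cb, true); (ca, false); (cb, false); (cb, false); (cb, false)]
      [(cb, true); (cb, true); (cb, true); (ca, true); (cb, false); (cb, false)]);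
      [simpl; tauto | reflexivity | reflexivity].
Qed.

Lemma theta_psi u : subst thetaG1C (subst psiCG1 u) = u.
Proof.
  induction u as [|l u IH]; auto.
  change (l :: u) with ([l] ++ u). rewrite !subst_app, IH.
  now destruct l as [[] []].
Qed.

Lemma psi_inj : hom_inj RC RG1 psiCG1.
Proof.
  intros u v H. apply theta_wd in H. now rewrite !theta_psi in H.
Qed.

Lemma psi_surj : hom_surj RC RG1 psiCG1.
Proof.
  intros w. exists (subst thetaG1C w).
  induction w as [|l w IH]; [apply pe_refl|].
  change (l :: w) with ([l] ++ w). rewrite !subst_app.
  apply pe_app; auto.
  apply pe_of_eval. destruct l as [[[]|] []]; vm_compute; reflexivity.
Qed.

(* x^2 y^3 is sent to the relator of C itself. *)
Lemma phi_wd : hom_wd RG RC phiGC.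
Proof.
  apply hom_wd_of_relators. intros r [<-|[]].
  exact (pe_rel _ RC [] [] _ (or_introl eq_refl)).
Qed.

(* Normal forms in G: z = x^2 = y^-3 is central, and every element is
   z^k times an alternating product of syllables x, y, y^2. *)
Definition x_l : letter Ggen := (gx, false).
Definition y_l : letter Ggen := (gy, false).
Definition x_inv : letter Ggen := (gx, true).
Definition y_inv : letter Ggen := (gy, true).

Definition g_eqb (x y : letter Ggen) : bool :=
  match fst x, fst y with gx, gx | gy, gy => true | _, _ => false end
  && Bool.eqb (snd x) (snd y).

Lemma g_eqb_spec x y : g_eqb x y = true <-> x = y.
Proof.
  destruct x as [[] []], y as [[] []]; simpl; split; intro H; try discriminate; reflexivity.
Qed.

Ltac by_G_relator p s :=
  apply (pe_by_rel _ _ g_eqb_spec _ (nth 0 RG []) p s);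
    [simpl; tauto | reflexivity | reflexivity].

Lemma y_commutes_x2 : pres_eq RG ([y_l] ++ [x_l; x_l]) ([x_l; x_l] ++ [y_l]).
Proof.
  apply pe_trans with [y_inv; y_inv].
  - by_G_relator [y_l] [y_inv; y_inv; y_inv].
  - apply pe_sym. by_G_relator (@nil (letter Ggen)) [y_inv; y_inv].
Qed.

Lemma y_cube : pres_eq RG [y_l; y_l; y_l] [x_inv; x_inv].
Proof. by_G_relator [x_inv; x_inv] (@nil (letter Ggen)). Qed.

Lemma y_inv_expand : pres_eq RG [y_inv] [x_l; x_l; y_l; y_l].
Proof. apply pe_sym. by_G_relator (@nil (letter Ggen)) [y_inv]. Qed.

Lemma x_inv_expand : pres_eq RG [x_inv] [x_inv; x_inv; x_l].
Proof. now apply (pe_by_free_reduce _ _ g_eqb_spec). Qed.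

Definition z_pow (k : Z) : word Ggen := zpow [x_l; x_l] k.

Inductive syl := SX | SY1 | SY2.

Definition syl_word (a : syl) : word Ggen :=
  match a with SX => [x_l] | SY1 => [y_l] | SY2 => [y_l; y_l] end.

Definition syls_word (s : list syl) : word Ggen := concat (map syl_word s).

Definition g_state := (Z * list syl)%type.

Definition g_state_word (m : g_state) : word Ggen := z_pow (fst m) ++ syls_word (snd m).

(* Left multiplication by x, y, x^-1 = z^-1 x and y^-1 = z y^2 on normal forms. *)
Definition zshift (d : Z) (m : g_state) : g_state := (fst m + d, snd m).

Definition gact_x (m : g_state) : g_state :=
  match m with (k, SX :: r) => (k + 1, r) | (k, s) => (k, SX :: s) end.

Definition gact_y (m : g_state) : g_state :=
  match m with
  | (k, SY1 :: r) => (k, SY2 :: r)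
  | (k, SY2 :: r) => (k - 1, r)
  | (k, s) => (k, SY1 :: s)
  end.

Definition gact (l : letter Ggen) (m : g_state) : g_state :=
  match l with
  | (gx, false) => gact_x m
  | (gx, true) => zshift (-1) (gact_x m)
  | (gy, false) => gact_y m
  | (gy, true) => zshift 1 (gact_y (gact_y m))
  end.

Definition geval (u : word Ggen) : g_state := fold_right gact (0, []) u.

Lemma central_move l k s : pres_eq RG (l ++ [x_l; x_l]) ([x_l; x_l] ++ l) ->
  pres_eq RG (l ++ g_state_word (k, s)) (z_pow k ++ l ++ syls_word s).
Proof.
  intros H. unfold g_state_word; simpl. rewrite !app_assoc.
  apply pe_app_r, commute_zpow, H.
Qed.

Lemma g_state_word_zshift_up m :
  pres_eq RG ([x_l; x_l] ++ g_state_word m) (g_state_word (zshift 1 m)).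
Proof. unfold g_state_word. rewrite app_assoc. apply pe_app_r, zpow_succ. Qed.

Lemma g_state_word_zshift_down m :
  pres_eq RG ([x_inv; x_inv] ++ g_state_word m) (g_state_word (zshift (-1) m)).
Proof.
  destruct m as [k s]. unfold g_state_word, zshift; cbn [fst snd].
  replace (k + -1) with (k - 1) by lia. rewrite app_assoc.
  apply pe_app_r, (zpow_pred _ _ [x_l; x_l]).
Qed.

Lemma gact_x_spec m : pres_eq RG (x_l :: g_state_word m) (g_state_word (gact_x m)).
Proof.
  destruct m as [k s].
  eapply pe_trans; [apply (central_move [x_l]), pe_refl|].
  destruct s as [|[] r]; try apply pe_refl.
  apply pe_trans with ([x_l; x_l] ++ g_state_word (k, r)).
  - replace (z_pow k ++ [x_l] ++ syls_word (SX :: r)) with ((z_pow k ++ [x_l; x_l]) ++ syls_word r)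
      by now rewrite <- app_assoc.
    unfold g_state_word; cbn [fst snd]. rewrite app_assoc.
    apply pe_app_r, pe_sym, commute_zpow, pe_refl.
  - apply g_state_word_zshift_up.
Qed.

Lemma gact_y_spec m : pres_eq RG (y_l :: g_state_word m) (g_state_word (gact_y m)).
Proof.
  destruct m as [k s].
  eapply pe_trans; [apply (central_move [y_l]), y_commutes_x2|].
  destruct s as [|[] r]; try apply pe_refl.
  apply pe_trans with (z_pow k ++ [x_inv; x_inv] ++ syls_word r).
  - apply pe_app_l. exact (pe_app_r _ _ _ [_; _; _] _ y_cube).
  - apply pe_trans with ([x_inv; x_inv] ++ g_state_word (k, r)).
    + apply pe_sym, central_move. now apply (pe_by_free_reduce _ _ g_eqb_spec).
    + apply g_state_word_zshift_down.
Qed.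

Lemma gact_spec l m : pres_eq RG (l :: g_state_word m) (g_state_word (gact l m)).
Proof.
  destruct l as [[] []]; simpl; [| apply gact_x_spec | | apply gact_y_spec].
  - apply pe_trans with ([x_inv; x_inv] ++ x_l :: g_state_word m).
    { exact (pe_app_r _ _ _ [_] [_; _; _] x_inv_expand). }
    eapply pe_trans; [apply pe_app_l, gact_x_spec | apply g_state_word_zshift_down].
  - apply pe_trans with ([x_l; x_l] ++ y_l :: y_l :: g_state_word m).
    { exact (pe_app_r _ _ _ [_] [_; _; _; _] y_inv_expand). }
    eapply pe_trans; [apply pe_app_l, (pe_app_l _ _ [y_l]), gact_y_spec|].
    eapply pe_trans; [apply pe_app_l, gact_y_spec | apply g_state_word_zshift_up].
Qed.

Lemma pe_g_state_word u : pres_eq RG u (g_state_word (geval u)).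
Proof.
  induction u as [|l u IH]; [apply pe_refl|].
  eapply pe_trans; [apply (pe_app_l _ _ [l]), IH | apply gact_spec].
Qed.

Fixpoint alternating (s : list syl) : Prop :=
  match s with
  | [] => True
  | SX :: r => alternating r /\ match r with SX :: _ => False | _ => True end
  | _ :: r => alternating r /\ match r with SY1 :: _ | SY2 :: _ => False | _ => True end
  end.

Lemma gact_alternating l m : alternating (snd m) -> alternating (snd (gact l m)).
Proof.
  destruct m as [k s].
  destruct l as [[] []], s as [|[] [|[] r]]; simpl; tauto.
Qed.

Lemma geval_alternating u : alternating (snd (geval u)).
Proof. induction u; simpl; auto using gact_alternating. Qed.

(* Injectivity of G -> C: the composite G -> C -> G1 sends the normal form
   z^k s to the G1-state (N - 6k, W), where (N, W) is the state of the
   syllable word s, and this state determines k and s. *)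
Definition Phi (w : word Ggen) : word G1gen := subst psiCG1 (subst phiGC w).

Lemma Phi_app u v : Phi (u ++ v) = Phi u ++ Phi v.
Proof. unfold Phi; now rewrite !subst_app. Qed.

Lemma Phi_pe u v : pres_eq RG u v -> pres_eq RG1 (Phi u) (Phi v).
Proof. intros H. now apply psi_wd, phi_wd. Qed.

Definition a0 : letter Aidx := (i0, false).

Definition syl_state (s : list syl) : state := eval (Phi (syls_word s)).

Lemma syl_state_nil : syl_state [] = (0, []).
Proof. reflexivity. Qed.

Lemma syl_state_cons a r : syl_state (a :: r) = act_word (Phi (syl_word a)) (syl_state r).
Proof.
  unfold syl_state, eval. change (syls_word (a :: r)) with (syl_word a ++ syls_word r).
  now rewrite Phi_app, act_word_app.
Qed.

Lemma syl_state_SX r : syl_state (SX :: r) =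
  (fst (syl_state r) - 3, acons (spow (fst (syl_state r) - 3) a0) (snd (syl_state r))).
Proof.
  rewrite syl_state_cons. destruct (syl_state r) as [n w]. simpl.
  now replace (n - 1 - 1 - 1) with (n - 3) by lia.
Qed.

Lemma syl_state_SY1 r : syl_state (SY1 :: r) = (fst (syl_state r) + 2, snd (syl_state r)).
Proof. rewrite syl_state_cons. destruct (syl_state r) as [n w]. simpl. f_equal; lia. Qed.

Lemma syl_state_SY2 r : syl_state (SY2 :: r) = (fst (syl_state r) + 4, snd (syl_state r)).
Proof. rewrite syl_state_cons. destruct (syl_state r) as [n w]. simpl. f_equal; lia. Qed.

Definition head_invariant (s : list syl) (m : state) : Prop :=
  match s with
  | [] | [SY1] | [SY2] => snd m = []
  | SX :: _ => exists w', snd m = spow (fst m) a0 :: w'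
  | SY1 :: _ => exists w', snd m = spow (fst m - 2) a0 :: w'
  | SY2 :: _ => exists w', snd m = spow (fst m - 4) a0 :: w'
  end.

(* Hence prepending a syllable x never cancels. *)
Lemma SX_no_cancel r : alternating (SX :: r) -> head_invariant r (syl_state r) ->
  areduced (spow (fst (syl_state r) - 3) a0 :: snd (syl_state r)) = true.
Proof.
  intros Halt Hhead. pose proof (eval_ok (Phi (syls_word r))) as Hok.
  fold (syl_state r) in Hok. unfold state_ok in Hok.
  destruct (syl_state r) as [n w]; simpl in *.
  destruct r as [|[] [|a r']]; simpl in Halt, Hhead; try tauto; try (now rewrite Hhead);
    destruct Hhead as [w' ->]; apply (is_reduced_cons _ _ aletter_eqb_spec _ _ _ Hok);
    rewrite spow_sub3; intros E%spow_eq_mod; Z.div_mod_to_equations; lia.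
Qed.

Lemma head_invariant_holds s : alternating s -> head_invariant s (syl_state s).
Proof.
  induction s as [|[] r IH]; intros Halt; [reflexivity| | |].
  - rewrite syl_state_SX. unfold acons; simpl.
    rewrite (cancel_cons_eq _ _ _ _ (SX_no_cancel r Halt (IH (proj1 Halt)))). eauto.
  - rewrite syl_state_SY1. destruct Halt as [Halt Hr]. specialize (IH Halt).
    destruct r as [|[] r']; simpl in *; try tauto.
    destruct IH as [w' ->]. exists w'. repeat f_equal; lia.
  - rewrite syl_state_SY2. destruct Halt as [Halt Hr]. specialize (IH Halt).
    destruct r as [|[] r']; simpl in *; try tauto.
    destruct IH as [w' ->]. exists w'. repeat f_equal; lia.
Qed.

Lemma syl_state_SX_alt r : alternating (SX :: r) ->
  syl_state (SX :: r) =
  (fst (syl_state r) - 3, spow (fst (syl_state r) - 3) a0 :: snd (syl_state r)).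
Proof.
  intros Halt. rewrite syl_state_SX. unfold acons. rewrite cancel_cons_eq; auto.
  apply SX_no_cancel; [exact Halt | apply head_invariant_holds, Halt].
Qed.

(* The state of Phi(z^k s). *)
Definition image_state (k : Z) (s : list syl) : state :=
  (fst (syl_state s) - 6 * k, snd (syl_state s)).

(* Phi(x^2) = a_0 b^-3 a_0 b^-3: its two a-letters cancel, leaving b^-6. *)
Lemma act_x2 n w : areduced w = true -> act_word (Phi [x_l; x_l]) (n, w) = (n - 6, w).
Proof.
  intros H. cbn. f_equal; [lia|].
  replace (n - 1 - 1 - 1 - 1 - 1 - 1) with (n - 3 - 3) by lia.
  replace (n - 1 - 1 - 1) with (n - 3) by lia.
  rewrite <- (spow_sub3 (n - 3)). apply (cancel_cons_inv _ _ aletter_eqb_spec), H.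
Qed.

Lemma act_z_pow_succ k m : state_ok m ->
  act_word (Phi (z_pow (k + 1))) m = act_word (Phi [x_l; x_l]) (act_word (Phi (z_pow k)) m).
Proof.
  intros Hm. rewrite <- act_word_app, <- Phi_app.
  exact (eq_sym (act_word_pe _ _ _ (Phi_pe _ _ (zpow_succ _ _ [x_l; x_l] k)) Hm)).
Qed.

Lemma act_z_pow k m : state_ok m -> act_word (Phi (z_pow k)) m = (fst m - 6 * k, snd m).
Proof.
  destruct m as [n w]. unfold state_ok; cbn [fst snd]. intros Hw.
  induction k as [|k IH|k IH] using Z.peano_ind.
  - simpl. f_equal; lia.
  - rewrite <- Z.add_1_r, act_z_pow_succ, IH, act_x2 by exact Hw. f_equal; lia.
  - rewrite <- Z.sub_1_r.
    pose proof (act_word_ok (Phi (z_pow (k - 1))) (n, w) Hw) as Hok.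
    rewrite <- (Z.sub_add 1 k), act_z_pow_succ in IH by exact Hw.
    destruct (act_word (Phi (z_pow (k - 1))) (n, w)) as [n' w'].
    rewrite act_x2 in IH by exact Hok. apply pair_equal_spec in IH as [Hn ->]. f_equal; lia.
Qed.

Lemma eval_Phi_g_state_word k s : eval (Phi (g_state_word (k, s))) = image_state k s.
Proof.
  unfold g_state_word, eval; cbn [fst snd]. rewrite Phi_app, act_word_app.
  apply act_z_pow, eval_ok.
Qed.

(* Reading the image state from the left recovers the normal form: the first
   letter sigma^(N - j)(a_0) tells, from N mod 6, which syllables come first. *)
Definition push (p : list syl) (m : g_state) : g_state := (fst m, p ++ snd m).

Fixpoint decode (N : Z) (w : word Aidx) : g_state :=
  match w with
  | [] => (- (N / 6), if N mod 6 =? 0 then [] else if N mod 6 =? 2 then [SY1] else [SY2])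
  | h :: w' =>
      if aletter_eqb h (spow N a0) then push [SX] (decode (N + 3) w')
      else if aletter_eqb h (spow (N - 2) a0) then push [SY1; SX] (decode (N + 1) w')
      else push [SY2; SX] (decode (N - 1) w')
  end.

Lemma spow_eqb_true a b c : a mod 6 = b mod 6 -> aletter_eqb (spow a c) (spow b c) = true.
Proof. intros H. rewrite (spow_mod a b c H). now apply aletter_eqb_spec. Qed.

Lemma spow_eqb_false a b c : a mod 6 <> b mod 6 -> aletter_eqb (spow a c) (spow b c) = false.
Proof.
  intros H. destruct (aletter_eqb _ _) eqn:E; auto.
  apply aletter_eqb_spec, spow_eq_mod in E. congruence.
Qed.

Ltac zmod := Z.div_mod_to_equations; lia.

Lemma decode_nil N j : N mod 6 = j -> decode N [] =
  (- (N / 6), if j =? 0 then [] else if j =? 2 then [SY1] else [SY2]).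
Proof. intros <-. reflexivity. Qed.

Lemma decode_image_state fuel : forall s k, (length s <= fuel)%nat -> alternating s ->
  decode (fst (image_state k s)) (snd (image_state k s)) = (k, s).
Proof.
  induction fuel as [|fuel IH]; intros s k Hlen Halt; unfold image_state;
    (destruct s as [|a r];
      [rewrite syl_state_nil; cbn [fst snd]; rewrite (decode_nil _ 0) by zmod; f_equal; zmod|]).
  { simpl in Hlen; lia. }
  destruct a.
  - rewrite syl_state_SX_alt by exact Halt. cbn [fst snd decode].
    rewrite spow_eqb_true by zmod.
    replace (fst (syl_state r) - 3 - 6 * k + 3) with (fst (image_state k r))
      by (unfold image_state; cbn [fst]; lia).
    change (snd (syl_state r)) with (snd (image_state k r)).
    rewrite IH; [reflexivity | simpl in Hlen; lia | apply Halt].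
  - destruct Halt as [Halt Hr]. destruct r as [|[] r']; try tauto.
    + rewrite syl_state_SY1, syl_state_nil; cbn [fst snd].
      rewrite (decode_nil _ 2) by zmod. f_equal. zmod.
    + rewrite syl_state_SY1, syl_state_SX_alt by exact Halt. cbn [fst snd decode].
      rewrite spow_eqb_false, spow_eqb_true by zmod.
      replace (fst (syl_state r') - 3 + 2 - 6 * k + 1) with (fst (image_state k r'))
        by (unfold image_state; cbn [fst]; lia).
      change (snd (syl_state r')) with (snd (image_state k r')).
      rewrite IH; [reflexivity | simpl in Hlen; lia | apply Halt].
  - destruct Halt as [Halt Hr]. destruct r as [|[] r']; try tauto.
    + rewrite syl_state_SY2, syl_state_nil; cbn [fst snd].
      rewrite (decode_nil _ 4) by zmod. f_equal. zmod.
    + rewrite syl_state_SY2, syl_state_SX_alt by exact Halt. cbn [fst snd decode].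
      rewrite !spow_eqb_false by zmod.
      replace (fst (syl_state r') - 3 + 4 - 6 * k - 1) with (fst (image_state k r'))
        by (unfold image_state; cbn [fst]; lia).
      change (snd (syl_state r')) with (snd (image_state k r')).
      rewrite IH; [reflexivity | simpl in Hlen; lia | apply Halt].
Qed.

Lemma image_state_injective k1 k2 s1 s2 : alternating s1 -> alternating s2 ->
  image_state k1 s1 = image_state k2 s2 -> (k1, s1) = (k2, s2).
Proof.
  intros H1 H2 H.
  rewrite <- (decode_image_state _ s1 k1 (le_n _) H1).
  rewrite <- (decode_image_state _ s2 k2 (le_n _) H2).
  now rewrite H.
Qed.

Lemma phi_inj : hom_inj RG RC phiGC.
Proof.
  intros u v H.
  assert (Huv : eval (Phi (g_state_word (geval u))) = eval (Phi (g_state_word (geval v)))).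
  { apply eval_pe. eapply pe_trans; [apply Phi_pe, pe_sym, pe_g_state_word|].
    eapply pe_trans; [apply psi_wd, H | apply Phi_pe, pe_g_state_word]. }
  pose proof (geval_alternating u) as Au. pose proof (geval_alternating v) as Av.
  destruct (geval u) as [k1 s1] eqn:Eu, (geval v) as [k2 s2] eqn:Ev.
  rewrite !eval_Phi_g_state_word in Huv.
  apply image_state_injective in Huv; [|exact Au|exact Av].
  eapply pe_trans; [apply pe_g_state_word|].
  rewrite Eu, Huv, <- Ev. apply pe_sym, pe_g_state_word.
Qed.

Close Scope Z_scope.

Theorem mainTheorem4 :
  (* x |-> a b^-3, y |-> b^2 defines an embedding G -> C *)
  (hom_wd RG RC phiGC /\ hom_inj RG RC phiGC) /\
  (* a |-> a_0, b |-> b defines an isomorphism C -> G1 *)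
  (hom_wd RC RG1 psiCG1 /\ hom_inj RC RG1 psiCG1 /\ hom_surj RC RG1 psiCG1) /\
  (* normal forms in G1: existence *)
  (forall w : word G1gen, exists (n : Z) (s : word Aidx),
      reduced s /\ pres_eq RG1 w (normal_form n s)) /\
  (* normal forms in G1: uniqueness *)
  (forall (n n' : Z) (s s' : word Aidx), reduced s -> reduced s' ->
      pres_eq RG1 (normal_form n s) (normal_form n' s') -> n = n' /\ s = s').
Proof.
  split; [split; [exact phi_wd | exact phi_inj]|].
  split; [split; [exact psi_wd | split; [exact psi_inj | exact psi_surj]]|].
  split; [exact normal_form_exists | exact normal_form_unique].
Qed.
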